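(* Let $A=\{a_1<\cdots<a_N\}$ be a finite set of real numbers, with $N$ sufficiently large (larger than some absolute constant). Then there exist a nonempty set $H'\subseteq H(A)$ of size $m$ and a positive integer $L$ such that (i) $Lm\geq N/(3\log_2N)$; (ii) $|A+A-A| \geq Lm^2/2$; (iii) for each $h\in H'$, $L\leq |A_h|\leq 2L$.
   Context: For $A=\{a_1<\cdots<a_N\}\subset\mathbb{R}$, $H(A)=\{a_{j+1}-a_j:j=1,\ldots,N-1\}$ is the set of consecutive differences of $A$, and for $h\in H(A)$, $A_h=\{a_i\in A: a_{i+1}-a_i=h\}$. $A+A-A=\{a+b-c:a,b,c\in A\}$. *)

From HB Require Import structures.
From mathcomp Require Import all_boot all_order all_algebra.
From mathcomp Require Import reals exp.
Set Implicit Arguments. Unset Strict Implicit. Unset Printing Implicit Defensive.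
Import Order.TTheory GRing.Theory Num.Theory.
Local Open Scope ring_scope.

Section Defs.
Variable R : realType.

(* a_1 < ... < a_N : the elements of A listed increasingly (0-indexed here) *)
Definition sortedA (A : seq R) : seq R := sort <=%R A.

Definition consec_diffs (A : seq R) : seq R :=
  let s := sortedA A in
  [seq nth 0 s i.+1 - nth 0 s i | i <- iota 0 (size s).-1].

Definition HA (A : seq R) : seq R := undup (consec_diffs A).

Definition A_h (A : seq R) (h : R) : seq R :=
  let s := sortedA A in
  [seq nth 0 s i | i <- iota 0 (size s).-1 & nth 0 s i.+1 - nth 0 s i == h].

Definition AApmA (A : seq R) : seq R :=
  undup [seq x - c | x <- [seq a + b | a <- A, b <- A], c <- A].

End Defs.

From HB Require Import structures.
From mathcomp Require Import all_boot all_order all_algebra.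
From mathcomp Require Import reals exp.
From mathcomp Require Import zify.
Set Implicit Arguments. Unset Strict Implicit. Unset Printing Implicit Defensive.
Import Order.TTheory GRing.Theory Num.Theory.
Local Open Scope ring_scope.

(* Let a_0 < ... < a_(N-1) be the elements of A and, for a
   gap value h in H(A), let c(h) = |A_h| be its multiplicity, so that the c(h)
   sum to N - 1 and each lies in [1, N - 1].  Sort the gap values into the
   dyadic classes {h | 2^k <= c(h) < 2^(k+1)}, k <= t := floor(log2 (N - 1)).
   By pigeonhole some class H' carries at least (N - 1)/(t + 1) of the total
   mass; with L = 2^k and m = |H'| this gives N - 1 <= (t + 1) * 2Lm, hence
   N <= 3tLm, which is (i), and (iii) holds by construction.  For (ii), each
   pair (i, h') with c(gap_i) in H', h' in H' and h' <= gap_i yields the element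
   a_i + h' = a_i + a_(j+1) - a_j of A + A - A; these are pairwise distinct
   because a_i + h' lies in (a_i, a_(i+1)].  Their number is
   sum_(h in H') c(h) * #{h' in H' | h' <= h} >= L * m^2 / 2.
   The file first proves general counting facts on sequences (regrouping a
   sum by values, pigeonhole, counting comparable pairs, dyadic classes) and
   two real inequalities, then the facts on the gaps of A (including the
   A + A - A bound), and finally assembles lemma6. *)

Lemma sum_count_regroup (I : Type) (T : eqType) (r : seq I) (f : I -> T)
    (H : seq T) (F : T -> nat) : uniq H ->
  (\sum_(i <- r | f i \in H) F (f i) =
   \sum_(h <- H) count (fun i => f i == h) r * F h)%N.
Proof.
move=> uH; elim: r => [|i r IH]; first by rewrite big_nil big1 // => h _.
rewrite big_cons IH /=; under [RHS]eq_bigr do rewrite mulnDl.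
rewrite big_split /=; case: ifP => fiH; last first.
  rewrite [X in (_ = X + _)%N]big1_seq // => h /andP[_ hH].
  by case: eqP fiH => // ->; rewrite hH.
congr (_ + _)%N.
rewrite (bigD1_seq (f i)) //= eqxx mul1n big1 ?addn0 // => h.
by rewrite eq_sym => /negbTE ->.
Qed.

Lemma sum_pigeonhole n (F : 'I_n.+1 -> nat) :
  exists j, (\sum_(i < n.+1) F i <= n.+1 * F j)%N.
Proof.
have [j _ jmax] := @arg_maxnP _ ord0 xpredT F isT.
exists j; apply: (@leq_trans (\sum_(i < n.+1) F j)).
  by apply: leq_sum => i _; exact: jmax.
by rewrite big_const_ord iter_addn_0 mulnC.
Qed.

Lemma count_sum (I : Type) (a : pred I) (r : seq I) :
  count a r = (\sum_(i <- r) a i)%N.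
Proof. by rewrite -sumn_count sumnE big_map. Qed.

(* In a totally ordered list of size m, the pairs (x, h) with x <= h number
   at least m^2/2, since each pair is comparable in one direction or the other. *)
Lemma pairs_le_count (d : Order.disp_t) (T : orderType d) (H : seq T) :
  (size H ^ 2 <= 2 * \sum_(h <- H) count (fun x => (x <= h)%O) H)%N.
Proof.
under eq_bigr do rewrite count_sum.
rewrite mul2n -addnn {2}exchange_big -big_split /= expnS expn1.
rewrite -sum1_size big_distrl /= leq_sum // => h _.
rewrite mul1n -big_split /= leq_sum // => x _.
by case: (leP x h) => // /ltW ->.
Qed.

Definition dyadic_class (T : eqType) (c : T -> nat) (H : seq T) (k : nat) :=
  [seq h <- H | trunc_log 2 (c h) == k].

Lemma dyadic_class_bounds (T : eqType) (c : T -> nat) (H : seq T) k :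
  {in H, forall h, 0 < c h}%N ->
  {in dyadic_class c H k, forall h, 2 ^ k <= c h < 2 ^ k.+1}%N.
Proof.
move=> c_gt0 h; rewrite mem_filter => /andP[/eqP <- hH].
exact: trunc_log_bounds (c_gt0 h hH).
Qed.

Lemma sum_dyadic_class_le (T : eqType) (c : T -> nat) (H : seq T) k :
  {in H, forall h, 0 < c h}%N ->
  (\sum_(h <- dyadic_class c H k) c h <= size (dyadic_class c H k) * 2 ^ k.+1)%N.
Proof.
move=> c_gt0; rewrite -sum1_size big_distrl /= !big_seq leq_sum // => h hH.
by rewrite mul1n ltnW //; case/andP: (dyadic_class_bounds c_gt0 hH).
Qed.

Lemma dyadic_pigeonhole (T : eqType) (c : T -> nat) (H : seq T) t :
  {in H, forall h, 0 < c h < 2 ^ t.+1}%N ->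
  exists k, (\sum_(h <- H) c h <= t.+1 * \sum_(h <- dyadic_class c H k) c h)%N.
Proof.
move=> c_bnd.
have tl_le h : h \in H -> (trunc_log 2 (c h) < t.+1)%N.
  case/c_bnd/andP => c_gt0 c_lt; rewrite -(ltn_exp2l _ _ (isT : 1 < 2)%N).
  exact: leq_ltn_trans (trunc_logP _ c_gt0) c_lt.
rewrite big_seq (partition_big (fun h => inord (trunc_log 2 (c h)) : 'I_t.+1) xpredT) //.
have [j ineq] := sum_pigeonhole
  (fun j : 'I_t.+1 => \sum_(h <- H | (h \in H) && (inord (trunc_log 2 (c h)) == j)) c h)%N.
exists j; apply: (leq_trans ineq); rewrite leq_mul2l big_filter; apply/orP; right.
apply/eq_leq; rewrite [RHS]big_seq_cond; apply: eq_bigl => h.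
by case hH: (h \in H) => //=; rewrite -(inj_eq val_inj) /= inordK ?tl_le.
Qed.

Lemma log2_lower_bound (R : realType) (t n : nat) :
  (2 ^ t <= n)%N -> t%:R <= ln (n%:R : R) / ln 2.
Proof.
move=> tn; have ln2_gt0 : (0 : R) < ln 2 by rewrite ln_gt0 // ltr1n.
have n_gt0 : (0 < n)%N by apply: leq_trans tn; rewrite expn_gt0.
rewrite ler_pdivlMr // mulrC mulr_natr -lnXn ?ltr0n // -natrX.
by rewrite ler_ln ?posrE ?ltr0n ?expn_gt0 // ler_nat.
Qed.

Lemma ratio_le_of_nat_le (R : realFieldType) (n t x : nat) (l : R) :
  (n <= 3 * t * x)%N -> (0 < t)%N -> t%:R <= l -> n%:R / (3 * l) <= x%:R.
Proof.
move=> ntx t_gt0 tl; have l_gt0 : 0 < l by apply: lt_le_trans tl; rewrite ltr0n.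
rewrite ler_pdivrMr ?mulr_gt0 //; apply: le_trans (_ : (x * (3 * t))%:R <= _).
  by rewrite ler_nat mulnC.
by rewrite natrM natrM ler_wpM2l ?ler0n // ler_wpM2l.
Qed.

Lemma dyadic_count_bound (n t x : nat) :
  (3 <= t)%N -> (0 < n.-1)%N -> (n.-1 <= t.+1 * (2 * x))%N -> (n <= 3 * t * x)%N.
Proof.
move=> t_ge3 n_gt1 n_le; have x_gt0 : (0 < x)%N by case: x n_le => //; rewrite !muln0; lia.
by nia.
Qed.

Section ConsecutiveGaps.
Variables (R : realType) (A : seq R).

Local Notation N := (size A).
Local Notation a i := (nth 0 (sortedA A) i).

Definition gap (i : nat) : R := a i.+1 - a i.

Definition gap_mult (h : R) : nat := count (fun i => gap i == h) (iota 0 N.-1).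

Lemma size_sortedA : size (sortedA A) = N.
Proof. by rewrite size_sort. Qed.

Lemma mem_sortedA i : (i < N)%N -> a i \in A.
Proof. by move=> iN; rewrite -(mem_sort <=%R) mem_nth ?size_sortedA. Qed.

Lemma HA_gapE : HA A = undup (map gap (iota 0 N.-1)).
Proof. by rewrite /HA /consec_diffs size_sortedA. Qed.

Lemma HA_gapP h : reflect (exists2 i, (i < N.-1)%N & h = gap i) (h \in HA A).
Proof.
rewrite HA_gapE mem_undup; apply: (iffP mapP) => [[i] | [i iN ->]].
  by rewrite mem_iota => /andP[_ iN] ->; exists i.
by exists i; rewrite ?mem_iota.
Qed.

Lemma size_A_h h : size (A_h A h) = gap_mult h.
Proof. by rewrite size_map size_filter size_sortedA. Qed.

Lemma gap_mult_gt0 h : h \in HA A -> (0 < gap_mult h)%N.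
Proof.
by case/HA_gapP => i iN ->; rewrite -has_count; apply/hasP; exists i; rewrite ?mem_iota.
Qed.

Lemma gap_mult_le h : (gap_mult h <= N.-1)%N.
Proof. by rewrite (leq_trans (count_size _ _)) ?size_iota. Qed.

Lemma sum_gap_mult : (\sum_(h <- HA A) gap_mult h = N.-1)%N.
Proof.
under eq_bigr do rewrite -[gap_mult _]muln1.
rewrite HA_gapE -sum_count_regroup ?undup_uniq // -HA_gapE sum1_count.
rewrite (eq_in_count (a2 := predT)) ?count_predT ?size_iota //.
by move=> i; rewrite mem_iota => /andP[_ iN]; apply/HA_gapP; exists i.
Qed.

Lemma AApmA_gap_shift i j : (i < N)%N -> (j < N.-1)%N -> a i + gap j \in AApmA A.
Proof.
move=> iN jN; have jN' : (j < N)%N by apply: leq_trans jN (leq_pred _).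
rewrite mem_undup /gap addrA; apply/allpairsP.
exists (a i + a j.+1, a j); split; rewrite ?mem_sortedA //.
by apply/allpairsP; exists (a i, a j.+1); rewrite ?mem_sortedA //; lia.
Qed.

End ConsecutiveGaps.

Section DistinctElements.
Variables (R : realType) (A : seq R).
Hypothesis uA : uniq A.

Local Notation N := (size A).
Local Notation a i := (nth 0 (sortedA A) i).

Lemma sortedA_lt i j : (i < j)%N -> (j < N)%N -> a i < a j.
Proof.
move=> ij jN; apply: (sorted_ltn_nth lt_trans) => //;
  by rewrite ?inE ?size_sortedA ?(ltn_trans ij) // /sortedA sort_lt_sorted.
Qed.

Lemma sortedA_le i j : (i <= j)%N -> (j < N)%N -> a i <= a j.
Proof. by rewrite leq_eqVlt => /predU1P[-> // | ij] jN; exact/ltW/sortedA_lt. Qed.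

Lemma HA_gt0 h : h \in HA A -> 0 < h.
Proof. by case/HA_gapP => i iN ->; rewrite subr_gt0 sortedA_lt //; lia. Qed.

(* a_i + h lies in (a_i, a_(i+1)] when 0 < h <= gap i, so the shifted
   elements a_i + h determine i and h. *)
Lemma gap_shift_inj i j (h1 h2 : R) : (i < N.-1)%N -> (j < N.-1)%N ->
  0 < h1 <= gap A i -> 0 < h2 <= gap A j -> a i + h1 = a j + h2 -> i = j /\ h1 = h2.
Proof.
suff lt_shift k l (g1 g2 : R) : (k < l)%N -> (l < N.-1)%N -> g1 <= gap A k -> 0 < g2 ->
    a k + g1 < a l + g2.
  move=> iN jN /andP[h1_gt0 h1_le] /andP[h2_gt0 h2_le] e.
  case: (ltngtP i j) => [ij | ji | eij]; last by move: e; rewrite eij => /addrI.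
  - by move: (lt_shift _ _ _ _ ij jN h1_le h2_gt0); rewrite e ltxx.
  - by move: (lt_shift _ _ _ _ ji iN h2_le h1_gt0); rewrite e ltxx.
move=> kl lN g1_le g2_gt0; rewrite /gap lerBrDl in g1_le.
apply: le_lt_trans g1_le _; apply: le_lt_trans (sortedA_le kl _) _; first lia.
by rewrite ltrDl.
Qed.

Lemma AApmA_lower_bound (H' : seq R) (L : nat) :
  uniq H' -> {subset H' <= HA A} -> {in H', forall h, L <= gap_mult A h}%N ->
  (L * size H' ^ 2 <= 2 * size (AApmA A))%N.
Proof.
move=> uH' sH' L_le.
pose I := [seq i <- iota 0 N.-1 | gap A i \in H'].
pose shifts i := [seq h <- H' | h <= gap A i].
pose T := [seq a i + h | i <- I, h <- shifts i].
have uT : uniq T.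
  apply: allpairs_uniq_dep => [|i _|]; rewrite ?filter_uniq ?iota_uniq //.
  move=> [i h1] [j h2] /allpairsPdep[i' [h1' [iI h1S [-> ->]]]].
  move=> /allpairsPdep[j' [h2' [jI h2S [-> ->]]]] /= e.
  move: iI jI h1S h2S; rewrite !mem_filter !mem_iota /=.
  move=> /andP[_ iN] /andP[_ jN] /andP[h1_le h1H] /andP[h2_le h2H].
  have [|| -> -> //] := gap_shift_inj iN jN _ _ e.
    by rewrite h1_le HA_gt0 ?sH'.
  by rewrite h2_le HA_gt0 ?sH'.
have sT : {subset T <= AApmA A}.
  move=> _ /allpairsPdep[i [h [iI hS ->]]].
  move: iI hS; rewrite !mem_filter mem_iota /= => /andP[_ iN] /andP[_ /sH' /HA_gapP[j jN ->]].
  by apply: AApmA_gap_shift => //; lia.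
have sizeT : size T = (\sum_(h <- H') gap_mult A h * count (<= h) H')%N.
  rewrite size_allpairs_dep sumnE big_map big_filter.
  under eq_bigr do rewrite size_filter.
  exact: (sum_count_regroup _ _ (fun h => count (<= h) H')).
apply: leq_trans (_ : 2 * size T <= _)%N; last by rewrite leq_mul2l uniq_leq_size.
apply: leq_trans (leq_mul (leqnn L) (pairs_le_count H')) _.
rewrite sizeT mulnCA leq_mul2l /= big_distrr /= !big_seq leq_sum // => h hH.
by rewrite leq_mul2r L_le ?orbT.
Qed.

End DistinctElements.

(* Main result: the dyadic class of gap values of largest total multiplicity
   works with L = 2^k. *)
Theorem lemma6 :
  exists N0 : nat, forall (R : realType) (A : seq R),
    uniq A -> (N0 <= size A)%N ->
    exists (H' : seq R) (L : nat),
      [/\ uniq H', H' != [::], {subset H' <= HA A} & (0 < L)%N] /\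
      [/\ (size A)%:R / (3 * (ln ((size A)%:R : R) / ln 2)) <= ((L * size H')%N)%:R :> R,
        ((L * (size H') ^ 2)%N)%:R / 2 <= ((size (AApmA A))%:R : R) &
        forall h, h \in H' -> (L <= size (A_h A h) <= 2 * L)%N].
Proof.
exists 9%N => R A uA N_ge; set N := size A; set t := trunc_log 2 N.-1.
have N1_gt0 : (0 < N.-1)%N by lia.
have /andP[t_lo t_hi] := trunc_log_bounds (isT : 1 < 2)%N N1_gt0.
have t_ge3 : (3 <= t)%N by apply: trunc_log_max => //; lia.
have mult_bnd : {in HA A, forall h, 0 < gap_mult A h < 2 ^ t.+1}%N.
  by move=> h hH; rewrite gap_mult_gt0 //= (leq_ltn_trans (gap_mult_le A h) t_hi).
have mult_gt0 : {in HA A, forall h, 0 < gap_mult A h}%N by move=> h /mult_bnd/andP[].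
have [k] := dyadic_pigeonhole mult_bnd; rewrite sum_gap_mult.
set H' := dyadic_class _ _ k => N_le.
have H'_bnd := dyadic_class_bounds (k := k) mult_gt0.
have size_bnd : (N.-1 <= t.+1 * (2 * (2 ^ k * size H')))%N.
  by rewrite (leq_trans N_le) // leq_mul2l mulnA -expnS mulnC sum_dyadic_class_le.
have uH' : uniq H' by exact/filter_uniq/undup_uniq.
have sH' : {subset H' <= HA A} by move=> h; rewrite mem_filter => /andP[].
exists H', (2 ^ k)%N; split; first split => //.
- by apply: contraTneq size_bnd => ->; rewrite muln0 -ltnNge; lia.
- by rewrite expn_gt0.
split.
- apply: (ratio_le_of_nat_le (dyadic_count_bound t_ge3 N1_gt0 size_bnd)); first lia.
  by apply: log2_lower_bound; rewrite (leq_trans t_lo) ?leq_pred.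
- rewrite ler_pdivrMr // -natrM ler_nat [X in (_ <= X)%N]mulnC.
  by apply: AApmA_lower_bound => // h /H'_bnd/andP[].
- move=> h /H'_bnd; rewrite size_A_h expnS mul2n -addnn.
  by case/andP => -> /ltnW.
Qed.
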